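(* Let $\lambda,\mu,\rho,\mathsf D>0$, $X=[-\frac{\mu\mathsf D}{2\lambda},\frac{\mu\mathsf D}{2\lambda}]$, and let $\hat f=\hat f_0$, i.e. $\hat f(x,y)=f(x,\hat y)$. 1. For $f=F_{0,0,\lambda,\mu,0}$ (i.e. $f(x,y)=-\frac{\lambda x^2}2+\mu xy$) and $Y=[-\frac12\mathsf D,\frac12\mathsf D]$, there exist $\hat y\in Y$ and $x^*\in X$ such that $\hat\varphi_{2\lambda}'(x^* )=0$ while $|\varphi_{2\lambda}'(x^* )|\ge\frac{\mu\mathsf D}{2}$. 2. If $\mu\ge\sqrt{2\lambda\rho/\mathsf D}$, then for $f=S_{\lambda,\rho,\mathsf D}$ and $Y=[0,\mathsf D]$ there exist $\hat y\in Y$ and $x^*\in X$ such that $\hat\varphi_{2\lambda}'(x^* )=0$ while $|\varphi_{2\lambda}'(x^* )|\ge\frac{\sqrt{\lambda\rho\mathsf D}}{3}$.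
   Context: For $k\in\mathbb N\cup\{0\}$, $s\in\{\pm1,0\}$, $\lambda>0$, $\mu\ge0$, $\rho\ge0$: $F_{k,s,\lambda,\mu,\rho}(x,y)=-\frac{\lambda x^2}{2}+\mu xy+\frac{s\rho|y|^{k+1}}{(k+1)!}$ on $\mathbb R\times\mathbb R$. Also $S_{\lambda,\rho,\mathsf D}(x,y)=-\frac{\lambda x^2}{4}+\frac{\rho y}{2}\big(\tanh\big(\sqrt{\tfrac{\lambda}{\rho\mathsf D}}\,x\big)-1\big)$. Given $f$, $X,Y\subseteq\mathbb R$ and $\hat y\in Y$: $\varphi(x)=\max_{y\in Y}f(x,y)$, $\hat\varphi(x)=\max_{y\in Y}\hat f(x,y)$, and for a function $\phi$ on $X$, $\phi_{2\lambda}(x)=\min_{u\in X}\{\phi(u)+\lambda(u-x)^2\}$ (Moreau envelope with parameter $2\lambda$); $'$ denotes the derivative in $x$. *)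

From HB Require Import structures.
From mathcomp Require Import all_boot all_order all_algebra.
From mathcomp Require Import all_classical all_reals all_analysis.
Set Implicit Arguments. Unset Strict Implicit. Unset Printing Implicit Defensive.
Import Order.TTheory GRing.Theory Num.Theory.
Import numFieldNormedType.Exports.
Local Open Scope classical_set_scope.
Local Open Scope ring_scope.

Section Defs.
Variable R : realType.

Definition tanh (x : R) : R := (expR x - expR (- x)) / (expR x + expR (- x)).

Definition Ffun (k : nat) (s lam mu rho : R) (x y : R) : R :=
  - (lam * x ^+ 2) / 2 + mu * x * y + s * rho * `|y| ^+ k.+1 / (k.+1)`!%:R.

Definition Sfun (lam rho D : R) (x y : R) : R :=
  - (lam * x ^+ 2) / 4 + rho * y / 2 * (tanh (Num.sqrt (lam / (rho * D)) * x) - 1).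

(* varphi(x) = max_{y in Y} f(x,y)  (the max is attained in all uses; written as sup) *)
Definition phi (f : R -> R -> R) (Y : set R) (x : R) : R :=
  sup [set f x y | y in Y].

Definition phihat (f : R -> R -> R) (yh : R) (Y : set R) (x : R) : R :=
  sup [set f x yh | y in Y].

(* Moreau envelope with parameter 2 lam: phi_{2lam}(x) = min_{u in X} phi(u) + lam (u-x)^2 *)
Definition moreau (ph : R -> R) (lam : R) (X : set R) (x : R) : R :=
  inf [set ph u + lam * (u - x) ^+ 2 | u in X].

Definition cint (a b : R) : set R := [set x | a <= x <= b].

End Defs.

(* The Moreau envelope of g with parameter 2 lam has derivative 2 lam (x0 - u0)
   at x0 as soon as u |-> g u + lam (u - x0)^2 has a minimiser u0 on X with
   quadratic growth: testing u0 bounds the envelope from above, and completing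
   the square in u - u0 bounds it from below.  In both examples yhat makes x*
   its own proximal point for phihat, so the envelope of phihat is stationary
   at x*, while the proximal point of x* for phi is 0, resp. 4 x* / 3, which
   yields the large slope; the lower bound on mu only serves to put x* and
   4 x* / 3 in X.  In the tanh example the growth at x* comes from the tangent
   bound tanh w >= tanh t + (1 - tanh t ^ 2) (w - t) - 2 (w - t)^2 at t = 1/2:
   since tanh (1/2) <= 1/2, the curvature it loses is at most 2 lam / 3, less
   than the 3 lam / 4 gained from the quadratic terms. *)

From HB Require Import structures.
From mathcomp Require Import all_boot all_order all_algebra.
From mathcomp Require Import all_classical all_reals all_analysis.
Import Order.TTheory GRing.Theory Num.Theory.
Import numFieldNormedType.Exports.
Local Open Scope classical_set_scope.
Local Open Scope ring_scope.
From mathcomp Require Import ring lra.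

Set Implicit Arguments.
Unset Strict Implicit.
Unset Printing Implicit Defensive.

Section Envelope.
Context {R : realType}.
Implicit Types (f g : R -> R) (S X : set R).

Lemma is_derive_quadratic_remainder f (x0 d K : R) :
  (forall x, `|f x - f x0 - d * (x - x0)| <= K * (x - x0) ^+ 2) ->
  is_derive x0 1 f d.
Proof.
move=> rem; have K0 : 0 <= K.
  by have := rem (x0 + 1); rewrite (addrC x0) addrK expr1n !mulr1; exact: le_trans.
suff quot : (fun h => h^-1 *: ((f \o shift x0) (h *: 1) - f x0)) @ 0^' --> d.
  by split; [apply/cvg_ex; exists d | exact: cvg_lim].
apply/cvgrPdist_le => e e0; rewrite near_withinE /=; apply/nbhs_ballP.
have K1 : 0 < K + 1 by lra.
exists (e / (K + 1)); first by rewrite /= divr_gt0.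
move=> h /=; rewrite /ball /= sub0r normrN ltr_pdivlMr // => he h0.
have hpos : 0 < `|h| by rewrite normr_gt0.
have := rem (h + x0); rewrite addrK /= scaler1 /shift /= => remh.
have -> : d - h^-1 * (f (h + x0) - f x0) = - h^-1 * (f (h + x0) - f x0 - d * h).
  by field.
rewrite normrM normrN normfV ler_pdivrMl //; apply: (le_trans remh).
rewrite -(real_normK (num_real h)) expr2 mulrA [K * _]mulrC -mulrA ler_pM2l //.
nra.
Qed.

Lemma sup_max S (v : R) : S v -> ubound S v -> sup S = v.
Proof.
move=> Sv ubv; apply/le_anti; rewrite ge_sup //=; last by exists v.
by apply: ub_le_sup => //; exists v.
Qed.

Lemma phihat_cst (f : R -> R -> R) (yh : R) (Y : set R) (x : R) :
  Y !=set0 -> phihat f yh Y x = f x yh.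
Proof. by case=> y Yy; apply: sup_max => [|_ [? _ <-]]; first exists y. Qed.

Lemma moreau_is_derive g (lam kap : R) X (x0 u0 : R) : 0 < kap -> X u0 ->
  (forall u, X u ->
     g u0 + lam * (u0 - x0) ^+ 2 + kap * (u - u0) ^+ 2 <= g u + lam * (u - x0) ^+ 2) ->
  is_derive x0 1 (moreau g lam X) (2 * lam * (x0 - u0)).
Proof.
move=> kap0 Xu0 growth; set m := g u0 + lam * (u0 - x0) ^+ 2.
set d := 2 * lam * (x0 - u0).
pose low x := m + d * (x - x0) + (lam - lam ^+ 2 / kap) * (x - x0) ^+ 2.
have lower x u : X u -> low x <= g u + lam * (u - x) ^+ 2.
  move=> Xu; have -> : g u + lam * (u - x) ^+ 2 =
      (g u + lam * (u - x0) ^+ 2 - (m + kap * (u - u0) ^+ 2))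
      + kap * (u - u0 - lam / kap * (x - x0)) ^+ 2 + low x.
    by rewrite /low /m /d; field; rewrite gt_eqF.
  rewrite lerDr addr_ge0 //; first by rewrite subr_ge0; exact: growth.
  exact: mulr_ge0 (ltW kap0) (sqr_ge0 _).
have env_ge x : low x <= moreau g lam X x.
  apply: lb_le_inf => [|_ [u Xu <-]]; last exact: lower.
  by exists (g u0 + lam * (u0 - x) ^+ 2), u0.
have env_le x : moreau g lam X x <= m + d * (x - x0) + lam * (x - x0) ^+ 2.
  rewrite [leRHS](_ : _ = g u0 + lam * (u0 - x) ^+ 2); last by rewrite /m /d; ring.
  by apply: ge_inf; [exists (low x) => _ [u Xu <-]; exact: lower | exists u0].
have env0 : moreau g lam X x0 = m.
  apply/le_anti; have := env_le x0; have := env_ge x0.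
  by rewrite /low subrr expr0n /= !mulr0 !addr0 => -> ->.
apply: (@is_derive_quadratic_remainder _ _ _ (`|lam| + lam ^+ 2 / kap)) => x.
move: (env_ge x) (env_le x); rewrite env0 /low !mulrDl.
have : lam * (x - x0) ^+ 2 <= `|lam| * (x - x0) ^+ 2 by rewrite ler_wpM2r ?sqr_ge0 ?ler_norm.
have : - (`|lam| * (x - x0) ^+ 2) <= lam * (x - x0) ^+ 2.
  by rewrite -mulNr ler_wpM2r ?sqr_ge0 ?lerNnormlW.
have : 0 <= lam ^+ 2 / kap * (x - x0) ^+ 2 by rewrite mulr_ge0 ?divr_ge0 ?sqr_ge0 ?ltW.
rewrite ler_norml; lra.
Qed.

End Envelope.

Section Tanh.
Context {R : realType}.
Implicit Types t w z : R.

Lemma tanh0 : tanh 0 = 0 :> R.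
Proof. by rewrite /tanh oppr0 subrr mul0r. Qed.

Lemma normr_tanh_le1 z : `|tanh z| <= 1.
Proof.
have ez := expR_gt0 z; have eNz := expR_gt0 (- z).
rewrite /tanh normrM normfV ler_pdivrMr ?normr_gt0 ?gt_eqF ?addr_gt0 //.
by rewrite mul1r (gtr0_norm (addr_gt0 ez eNz)) ler_norml; apply/andP; split; lra.
Qed.

Lemma is_derive_tanh z : is_derive z 1 (@tanh R) (1 - tanh z ^+ 2).
Proof.
pose eN := fun y : R => expR (- y).
have deN (y : R) : is_derive y 1 eN (- eN y).
  have : is_derive y 1 (expR \o -%R) (expR (- y) * -1) by apply: is_derive1_comp.
  by rewrite mulrN1.
have pos : (expR + eN) z != 0 by rewrite gt_eqF ?addr_gt0 ?expR_gt0.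
have -> : @tanh R = (expR - eN) * (fun y => ((expR + eN) y)^-1) by apply/funext.
have D := is_deriveM (is_deriveB (is_derive_expR z) (deN z))
  (is_deriveV pos (is_deriveD (is_derive_expR z) (deN z))).
apply: (is_derive_eq D); move: pos; rewrite /= opprK /eN.
set A := expR z; set B := expR (- z) => pos.
change ((A - B) * (- (A + B) ^- 2 * (A - B)) + (A + B)^-1 * (A + B)
  = 1 - ((A - B) / (A + B)) ^+ 2).
by field.
Qed.

Lemma tanh_mean_value w t : exists c,
  `|c - t| <= `|w - t| /\ tanh w - tanh t = (1 - tanh c ^+ 2) * (w - t).
Proof.
have cont a b : {within `[a, b], continuous (@tanh R)}.
  by apply: derivable_within_continuous => x _; case: (is_derive_tanh x).
have [tw|wt] := leP t w.
  have [c + ->] := MVT_segment tw (fun x _ => is_derive_tanh x) (cont t w).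
  rewrite in_itv /= => /andP[tc cw].
  by exists c; split => //; rewrite !ger0_norm ?subr_ge0 //; lra.
have [c + eq_tw] := MVT_segment (ltW wt) (fun x _ => is_derive_tanh x) (cont w t).
rewrite in_itv /= => /andP[wc ct].
exists c; rewrite !ler0_norm ?subr_le0 ?(ltW wt) //; split; first lra.
by rewrite -opprB eq_tw; ring.
Qed.

Lemma tanh_lipschitz w t : `|tanh w - tanh t| <= `|w - t|.
Proof.
have [c [_ ->]] := tanh_mean_value w t.
rewrite normrM ler_piMl // ger0_norm; last first.
  by rewrite subr_ge0 -real_normK ?num_real // expr_le1 ?normr_tanh_le1.
by rewrite lerBlDr lerDl sqr_ge0.
Qed.

Lemma normr_tanh_le z : `|tanh z| <= `|z|.
Proof. by have := tanh_lipschitz z 0; rewrite tanh0 !subr0. Qed.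

Lemma tanh_ge_tangent w t :
  tanh t + (1 - tanh t ^+ 2) * (w - t) - 2 * (w - t) ^+ 2 <= tanh w.
Proof.
have [c [ct eq_wt]] := tanh_mean_value w t.
have -> : tanh w = tanh t + (1 - tanh t ^+ 2) * (w - t)
    + (tanh t - tanh c) * (tanh t + tanh c) * (w - t).
  by rewrite -(subrK (tanh t) (tanh w)) eq_wt; ring.
rewrite lerD2l; apply: lerNnormlW.
have diff : `|tanh t - tanh c| <= `|w - t|.
  by rewrite distrC; apply: le_trans (tanh_lipschitz c t) ct.
have sum : `|tanh t + tanh c| <= 2.
  by apply: le_trans (ler_normD _ _) _; rewrite lerD ?normr_tanh_le1.
have := ler_pM (normr_ge0 _) (normr_ge0 _) diff sum.
rewrite !normrM -real_normK ?num_real // expr2 mulrA [2 * _]mulrC.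
exact: ler_wpM2r.
Qed.

End Tanh.

Section BilinearExample.
Variables (R : realType) (lam mu D : R).
Local Notation c := (mu * D / (2 * lam)).
Local Notation f := (Ffun 0 0 lam mu 0).
Local Notation Y := (cint (- (D / 2)) (D / 2)).
Local Notation X := (cint (- c) c).

Lemma Ffun_bilinearE x y : f x y = - (lam * x ^+ 2) / 2 + mu * x * y.
Proof. by rewrite /Ffun !mul0r addr0. Qed.

Lemma phi_bilinear u : 0 <= mu -> 0 <= D ->
  phi f Y u = - (lam * u ^+ 2) / 2 + mu * D / 2 * `|u|.
Proof.
move=> mu0 D0; apply: sup_max.
  exists (Num.sg u * (D / 2)); last by rewrite Ffun_bilinearE (normrEsg u); congr (_ + _); ring.
  by rewrite /cint /=; case: sgrP => _; apply/andP; split; lra.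
move=> _ [y /andP[y1 y2] <-]; rewrite Ffun_bilinearE lerD2l.
have [u0|u0] := leP 0 u.
  have : 0 <= mu * u * (D / 2 - y) by rewrite !mulr_ge0 ?subr_ge0.
  by rewrite ger0_norm //; lra.
have : 0 <= mu * - u * (y + D / 2) by apply: mulr_ge0; [apply: mulr_ge0 |]; lra.
by rewrite ltr0_norm //; lra.
Qed.

Lemma moreau_phihat_bilinear : 0 < lam -> 0 < mu -> 0 < D ->
  is_derive (c / 2) 1 (moreau (phihat f (D / 4) Y) lam X) 0.
Proof.
move=> lam0 mu0 D0; have c0 : 0 < c by rewrite divr_gt0 ?mulr_gt0.
have g u : phihat f (D / 4) Y u = - (lam * u ^+ 2) / 2 + lam * c / 2 * u.
  rewrite phihat_cst; last by exists 0; rewrite /cint /=; apply/andP; split; lra.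
  by rewrite Ffun_bilinearE; field; rewrite gt_eqF.
apply: is_derive_eq (@moreau_is_derive _ _ _ (lam / 2) _ _ (c / 2) _ _ _) _.
- by rewrite divr_gt0.
- by rewrite /cint /=; apply/andP; split; lra.
- by move=> u _; rewrite !g !expr2; lra.
by rewrite subrr mulr0.
Qed.

Lemma moreau_phi_bilinear : 0 < lam -> 0 < mu -> 0 < D ->
  is_derive (c / 2) 1 (moreau (phi f Y) lam X) (mu * D / 2).
Proof.
move=> lam0 mu0 D0; have c0 : 0 < c by rewrite divr_gt0 ?mulr_gt0.
have g u : phi f Y u = - (lam * u ^+ 2) / 2 + lam * c * `|u|.
  by rewrite phi_bilinear ?ltW //; congr (_ + _ * _); field; rewrite gt_eqF.
have -> : mu * D / 2 = lam * c by field; rewrite gt_eqF.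
apply: is_derive_eq (@moreau_is_derive _ _ _ (lam / 2) _ _ 0 _ _ _) _.
- by rewrite divr_gt0.
- by rewrite /cint /=; apply/andP; split; lra.
- move=> u _; rewrite !g normr0.
  have := ler_wpM2l (ltW (mulr_gt0 lam0 c0)) (ler_norm u).
  by rewrite !expr2; lra.
by rewrite subr0; field; rewrite gt_eqF.
Qed.
End BilinearExample.

Section TanhExample.
Variables (R : realType) (lam mu rho D : R).
Local Notation c := (mu * D / (2 * lam)).
Local Notation f := (Sfun lam rho D).
Local Notation Y := (cint 0 D).
Local Notation X := (cint (- c) c).
Local Notation s := (Num.sqrt (lam / (rho * D))).
Local Notation xs := ((2 * s)^-1).
Local Notation sig := (1 - tanh (2^-1 : R) ^+ 2).
Local Notation yh := (D / (2 * sig)).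

Lemma sech2_half_ge : 3 / 4 <= sig.
Proof.
have := normr_tanh_le (2^-1 : R); rewrite [`|2^-1|]ger0_norm ?invr_ge0 ?ler0n //.
rewrite -[tanh _ ^+ 2]real_normK ?num_real // => le_half.
have := normr_ge0 (tanh (2^-1 : R)); nra.
Qed.

Lemma yh_in_Y : 0 <= D -> Y yh.
Proof.
move=> D0; have := sech2_half_ge => sig34.
rewrite /cint /= divr_ge0 ?mulr_ge0 //=; last lra.
by rewrite ler_pdivrMr ?mulr_gt0 //; nra.
Qed.

Lemma phi_Sfun u : 0 <= rho -> 0 <= D -> phi f Y u = - (lam * u ^+ 2) / 4.
Proof.
move=> rho0 D0; apply: sup_max.
  by exists 0; [rewrite /cint /= lexx | rewrite /Sfun mulr0 !mul0r addr0].
move=> _ [y /andP[y0 _] <-]; rewrite /Sfun gerDl mulr_ge0_le0 ?divr_ge0 ?mulr_ge0 //.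
by rewrite subr_le0; apply: le_trans (ler_norm _) (normr_tanh_le1 _).
Qed.

Lemma s_gt0 : 0 < lam -> 0 < rho -> 0 < D -> 0 < s.
Proof. by move=> *; rewrite sqrtr_gt0 divr_gt0 ?mulr_gt0. Qed.

Lemma four_thirds_xs_le_c : 0 < lam -> 0 < rho -> 0 < D ->
  Num.sqrt (2 * lam * rho / D) <= mu -> 4 * xs / 3 <= c.
Proof.
move=> lam0 rho0 D0 hmu; have s0 := s_gt0 lam0 rho0 D0.
have s2 : s ^+ 2 = lam / (rho * D) by rewrite sqr_sqrtr // ltW // divr_gt0 ?mulr_gt0.
have mu2 : 2 * lam * rho / D <= mu ^+ 2.
  have q0 : 0 <= 2 * lam * rho / D by rewrite divr_ge0 ?mulr_ge0 ?ltW.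
  by rewrite -[leLHS](sqr_sqrtr q0) !expr2; apply: ler_pM; rewrite ?sqrtr_ge0.
have sc2 : (s * c) ^+ 2 - 2^-1 = (mu ^+ 2 - 2 * lam * rho / D) * (D / (4 * lam * rho)).
  by rewrite exprMn s2; field; rewrite !gt_eqF.
have : 2^-1 <= (s * c) ^+ 2.
  rewrite -subr_ge0 sc2; apply: mulr_ge0; first by rewrite subr_ge0.
  by rewrite divr_ge0 ?mulr_ge0 ?ltW.
have : 0 <= s * c.
  have mu0 : 0 <= mu := le_trans (sqrtr_ge0 _) hmu.
  by apply: mulr_ge0; [exact: ltW s0 | rewrite divr_ge0 ?mulr_ge0 // ?ltW].
have -> : 4 * xs / 3 = (2 / 3) / s by field; rewrite gt_eqF.
rewrite ler_pdivrMr // mulrC; nra.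
Qed.

Lemma xs_in_X : 0 < lam -> 0 < rho -> 0 < D ->
  Num.sqrt (2 * lam * rho / D) <= mu -> X xs /\ X (4 * xs / 3).
Proof.
move=> lam0 rho0 D0 hmu; have := four_thirds_xs_le_c lam0 rho0 D0 hmu.
have : 0 < xs by rewrite invr_gt0 mulr_gt0 ?s_gt0.
by rewrite /cint /= => *; split; apply/andP; split; lra.
Qed.

Lemma Sfun_growth u : 0 < lam -> 0 < rho -> 0 < D ->
  f xs yh + lam / 12 * (u - xs) ^+ 2 <= f u yh + lam * (u - xs) ^+ 2.
Proof.
move=> lam0 rho0 D0; have s0 := s_gt0 lam0 rho0 D0.
have s2 : s ^+ 2 * (rho * D) = lam.
  by rewrite sqr_sqrtr ?divr_ge0 ?mulr_ge0 ?ltW //; field; rewrite !gt_eqF.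
have sig34 := sech2_half_ge.
rewrite /Sfun; move: s0 s2; set s := Num.sqrt _ => s0 s2.
set x0 := (2 * s)^-1; have sx0 : s * x0 = 2^-1 by rewrite /x0; field; rewrite gt_eqF.
set k := rho * yh / 2; set h := u - x0.
have k0 : 0 <= k by rewrite !mulr_ge0 ?invr_ge0 ?ltW //; lra.
have sig0 : sig != 0 by rewrite gt_eqF //; lra.
have k_sig : k * sig = rho * D / 4 by rewrite /k; field.
have k_s2 : k * s ^+ 2 <= lam / 3.
  have -> : k * s ^+ 2 = lam / (4 * sig) by rewrite /k -s2; field.
  by rewrite ler_pM2l // lef_pV2 ?posrE; lra.
have tangent := tanh_ge_tangent (s * u) (2^-1).
rewrite (_ : s * u - 2^-1 = s * h) in tangent; last by rewrite /h mulrBr sx0.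
have {}tangent : k * tanh (2^-1) + rho * D / 4 * (s * h) - 2 * (k * s ^+ 2) * h ^+ 2
    <= k * tanh (s * u).
  rewrite -k_sig; move: (ler_wpM2l k0 tangent).
  by apply: le_trans; rewrite le_eqVlt; apply/orP; left; apply/eqP; ring.
have quad := ler_wpM2r (sqr_ge0 h) k_s2.
have lam_xs : lam * x0 = rho * D * s / 2 by rewrite -s2 /x0; field; rewrite gt_eqF.
have -> : lam * u ^+ 2 = lam * x0 ^+ 2 + 2 * (lam * x0) * h + lam * h ^+ 2.
  by rewrite /h; ring.
rewrite sx0 lam_xs; lra.
Qed.

Lemma moreau_phihat_Sfun : 0 < lam -> 0 < rho -> 0 < D ->
  Num.sqrt (2 * lam * rho / D) <= mu ->
  is_derive xs 1 (moreau (phihat f yh Y) lam X) 0.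
Proof.
move=> lam0 rho0 D0 hmu; have [Xxs _] := xs_in_X lam0 rho0 D0 hmu.
have g u : phihat f yh Y u = f u yh by apply: phihat_cst; exists 0; rewrite /cint /= lexx ltW.
apply: is_derive_eq (@moreau_is_derive _ _ _ (lam / 12) _ _ xs _ Xxs _) _.
- by rewrite divr_gt0.
- by move=> u _; rewrite !g subrr expr0n /= mulr0 addr0 Sfun_growth.
by rewrite subrr mulr0.
Qed.

Lemma moreau_phi_Sfun : 0 < lam -> 0 < rho -> 0 < D ->
  Num.sqrt (2 * lam * rho / D) <= mu ->
  is_derive xs 1 (moreau (phi f Y) lam X) (- (Num.sqrt (lam * rho * D) / 3)).
Proof.
move=> lam0 rho0 D0 hmu; have [_ X43] := xs_in_X lam0 rho0 D0 hmu.
apply: is_derive_eq (@moreau_is_derive _ _ _ (3 * lam / 4) _ _ (4 * xs / 3) _ X43 _) _.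
- by rewrite divr_gt0 ?mulr_gt0.
- by move=> u _; rewrite !phi_Sfun ?(ltW rho0) ?(ltW D0) // !expr2; lra.
have s0 := s_gt0 lam0 rho0 D0.
have e : Num.sqrt (lam * rho * D) * s = lam.
  rewrite -sqrtrM ?mulr_ge0 ?ltW //.
  have -> : lam * rho * D * (lam / (rho * D)) = lam ^+ 2 by field; rewrite !gt_eqF.
  by rewrite sqrtr_sqr gtr0_norm.
move: s0 e; set s := Num.sqrt (lam / _); set q := Num.sqrt _ => s0 e.
by rewrite -e; field; rewrite gt_eqF.
Qed.

End TanhExample.

Theorem proposition3 (R : realType) (lam mu rho D : R) :
  0 < lam -> 0 < mu -> 0 < rho -> 0 < D ->
  (* part 1 *)
  (let f := Ffun 0 0 lam mu 0 in
   let X := cint (- (mu * D / (2 * lam))) (mu * D / (2 * lam)) in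
   let Y := cint (- (D / 2)) (D / 2) in
   exists2 yh, Y yh &
   exists2 xs, X xs &
     is_derive xs 1 (moreau (phihat f yh Y) lam X) 0 /\
     exists2 d, is_derive xs 1 (moreau (phi f Y) lam X) d & mu * D / 2 <= `|d|)
  /\
  (* part 2 *)
  (Num.sqrt (2 * lam * rho / D) <= mu ->
   let f := Sfun lam rho D in
   let X := cint (- (mu * D / (2 * lam))) (mu * D / (2 * lam)) in
   let Y := cint 0 D in
   exists2 yh, Y yh &
   exists2 xs, X xs &
     is_derive xs 1 (moreau (phihat f yh Y) lam X) 0 /\
     exists2 d, is_derive xs 1 (moreau (phi f Y) lam X) d &
       Num.sqrt (lam * rho * D) / 3 <= `|d|).
Proof.
move=> lam0 mu0 rho0 D0; split.
  have c0 : 0 < mu * D / (2 * lam) by rewrite divr_gt0 ?mulr_gt0.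
  exists (D / 4); first by rewrite /cint /=; apply/andP; split; lra.
  exists (mu * D / (2 * lam) / 2); first by rewrite /cint /=; apply/andP; split; lra.
  split; first exact: moreau_phihat_bilinear.
  exists (mu * D / 2); first exact: moreau_phi_bilinear.
  by rewrite ger0_norm // divr_ge0 ?mulr_ge0 ?ltW.
move=> hmu; have [Xxs _] := xs_in_X lam0 rho0 D0 hmu.
exists (D / (2 * (1 - tanh 2^-1 ^+ 2))); first exact/yh_in_Y/ltW.
exists (2 * Num.sqrt (lam / (rho * D)))^-1 => //.
split; first exact: moreau_phihat_Sfun.
exists (- (Num.sqrt (lam * rho * D) / 3)); first exact: moreau_phi_Sfun.
by rewrite normrN ger0_norm // divr_ge0 ?sqrtr_ge0.
Qed.
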